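(* Let $y\in\mathbb Y$ be such that the Riccati equations with parameter $y$ have a global solution $(\Phi_y,\Psi_y)$, and let $(h,x)\in C^1(\mathbb R_+)\times\mathbb X$ satisfy $h(0)=\ell+\langle\lambda,x\rangle$. Then the equation $h=\mathcal H_y(\theta,x)$, where $$\mathcal H_y(\theta,x)(\tau)=\ell-\int_0^\tau\theta(s)\langle\Psi_y'(\tau-s),e_1\rangle ds-\Phi_y'(\tau)-\langle\Psi_y'(\tau),x\rangle,\quad\tau\ge0,$$ has a unique solution $\theta\in C(\mathbb R_+)$ (denoted $\mathcal C_y(h,x)$).
   Context: $\mathbb X=\mathbb R_+^{d_1}\times\mathbb R^{d_2}$ (up to permutation of coordinates), $d=d_1+d_2\ge1$, $e_1$ the first canonical basis vector, $\langle\cdot,\cdot\rangle$ the Euclidean inner product. For a parameter $y$: symmetric positive semidefinite $a_y,\alpha_y^1,\dots,\alpha_y^d\in\mathbb R^{d\times d}$ and $b_y,\beta_y^1,\dots,\beta_y^d\in\mathbb R^d$. Fix $\ell\in\mathbb R$ and $\lambda\in\mathbb R^d$ with $\langle\lambda,e_1\rangle\neq0$. With $F_y(u)=\tfrac12\langle u,a_yu\rangle+\langle u,b_y\rangle$, $R_y^i(u)=\tfrac12\langle u,\alpha_y^iu\rangle+\langle u,\beta_y^i\rangle$, the Riccati equations are $\Phi_y'=F_y\circ\Psi_y$, $\Phi_y(0)=0$, $\Psi_y'=R_y\circ\Psi_y-\lambda$, $\Psi_y(0)=0$. *)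

From Stdlib Require Import Reals Lra.
Open Scope R_scope.

(* Vectors of R^d are functions nat -> R (only indices < d matter);
   d x d matrices are functions nat -> nat -> R. Index 0 is the first
   coordinate, so <v, e_1> = v 0. *)
Definition vec := nat -> R.
Definition mat := nat -> nat -> R.

Fixpoint rsum (n : nat) (f : nat -> R) : R :=
  match n with O => 0 | S m => rsum m f + f m end.

Definition inner (d : nat) (u v : vec) : R := rsum d (fun i => u i * v i).
Definition matvec (d : nat) (A : mat) (u : vec) : vec :=
  fun i => rsum d (fun j => A i j * u j).

Definition sym_psd (d : nat) (A : mat) : Prop :=
  (forall i j, (i < d)%nat -> (j < d)%nat -> A i j = A j i) /\
  (forall u : vec, 0 <= inner d u (matvec d A u)).

Definition quadF (d : nat) (a : mat) (b : vec) (u : vec) : R :=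
  / 2 * inner d u (matvec d a u) + inner d u b.

Definition RicR (d : nat) (alpha : nat -> mat) (beta : nat -> vec) (u : vec) : vec :=
  fun i => quadF d (alpha i) (beta i) u.

(* x in X = R_+^{d1} x R^{d2} up to permutation: the coordinates i < d with
   pos i are the nonnegative ones *)
Definition in_X (d : nat) (pos : nat -> Prop) (x : vec) : Prop :=
  forall i, (i < d)%nat -> pos i -> 0 <= x i.

Definition cont_Rplus (f : R -> R) : Prop :=
  forall t, 0 <= t -> forall eps, 0 < eps -> exists delta, 0 < delta /\
    forall s, 0 <= s -> Rabs (s - t) < delta -> Rabs (f s - f t) < eps.

Definition deriv_Rplus (f f' : R -> R) : Prop :=
  forall t, 0 <= t -> forall eps, 0 < eps -> exists delta, 0 < delta /\
    forall s, 0 <= s -> s <> t -> Rabs (s - t) < delta ->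
      Rabs ((f s - f t) / (s - t) - f' t) < eps.

Definition C1_Rplus (f : R -> R) : Prop :=
  exists f', deriv_Rplus f f' /\ cont_Rplus f'.

Definition is_RInt (f : R -> R) (a b v : R) : Prop :=
  exists pr : Riemann_integrable f a b, RiemannInt pr = v.

Definition riccati_global_solution (d : nat) (a : mat) (b : vec)
    (alpha : nat -> mat) (beta : nat -> vec) (lam : vec)
    (Phi : R -> R) (Psi : R -> vec) (dPhi : R -> R) (dPsi : R -> vec) : Prop :=
  deriv_Rplus Phi dPhi /\
  (forall i, (i < d)%nat -> deriv_Rplus (fun t => Psi t i) (fun t => dPsi t i)) /\
  Phi 0 = 0 /\ (forall i, (i < d)%nat -> Psi 0 i = 0) /\
  (forall t, 0 <= t -> dPhi t = quadF d a b (Psi t)) /\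
  (forall t, 0 <= t -> forall i, (i < d)%nat ->
      dPsi t i = RicR d alpha beta (Psi t) i - lam i).

Definition solves_H (d : nat) (l : R) (dPhi : R -> R) (dPsi : R -> vec)
    (h : R -> R) (x : vec) (theta : R -> R) : Prop :=
  forall tau, 0 <= tau -> exists I,
    is_RInt (fun s => theta s * dPsi (tau - s) O) 0 tau I /\
    h tau = l - I - dPhi tau - inner d (dPsi tau) x.

(* Put k := <Psi_y', e_1> and g := l - h - Phi_y' - <Psi_y', x>; then h = H_y(theta, x) is the
   Volterra equation of the first kind  int_0^tau theta(s) k(tau - s) ds = g(tau).  The Riccati
   equations make k and g of class C^1, with k(0) = -<lambda, e_1> <> 0, and the compatibility
   condition h(0) = l + <lambda, x> gives g(0) = 0.  Differentiating therefore yields the equivalent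
   equation of the second kind  theta = (g' - theta * k') / k(0),  whose unique continuous solution
   comes from Picard iteration: for a kernel bounded by L on [0, T], convolution is a contraction
   with constant 1/2 for the weighted norm sup |w(s)| e^(-2 L s).  Functions given on R_+ are
   extended affinely to the left so that calculus on the whole real line applies. *)

From Stdlib Require Import Reals Lra Lia FunctionalExtensionality.
From Coquelicot Require Import Coquelicot.
Open Scope R_scope.

Lemma rsum_ext n f g : (forall i, (i < n)%nat -> f i = g i) -> rsum n f = rsum n g.
Proof.
  induction n as [|n IH]; intros Hfg; simpl; [reflexivity|].
  rewrite IH by (intros; apply Hfg; lia). rewrite Hfg by lia; reflexivity.
Qed.

Lemma rsum_eq0 n f : (forall i, (i < n)%nat -> f i = 0) -> rsum n f = 0.
Proof.
  intros Hf. rewrite (rsum_ext n f (fun _ => 0)) by exact Hf. clear Hf.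
  induction n as [|n IH]; simpl; [reflexivity|]. rewrite IH; ring.
Qed.

Lemma rsum_opp n f : rsum n (fun i => - f i) = - rsum n f.
Proof. induction n as [|n IH]; simpl; [ring|]. rewrite IH; ring. Qed.

Lemma quadF_eq0 d A B u : (forall i, (i < d)%nat -> u i = 0) -> quadF d A B u = 0.
Proof.
  intros Hu. unfold quadF, inner.
  rewrite !rsum_eq0 by (intros i Hi; rewrite Hu by exact Hi; ring). ring.
Qed.

Lemma continuity_cst c : continuity (fun _ => c).
Proof. apply continuity_const. intros ? ?; reflexivity. Qed.

Section PolynomialClosure.

Variable P : (R -> R) -> Prop.
Hypothesis P_const : forall c, P (fun _ => c).
Hypothesis P_plus : forall f g, P f -> P g -> P (fun t => f t + g t).
Hypothesis P_mult : forall f g, P f -> P g -> P (fun t => f t * g t).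

Lemma polyclosed_minus f g : P f -> P g -> P (fun t => f t - g t).
Proof.
  intros Hf Hg.
  replace (fun t => f t - g t) with (fun t => f t + -1 * g t)
    by (apply functional_extensionality; intros t; ring).
  apply P_plus; [exact Hf | exact (P_mult (fun _ => -1) g (P_const (-1)) Hg)].
Qed.

Lemma polyclosed_rsum n (F : nat -> R -> R) :
  (forall i, (i < n)%nat -> P (F i)) -> P (fun t => rsum n (fun i => F i t)).
Proof.
  induction n as [|n IH]; intros HF; simpl; [apply P_const|].
  apply P_plus; [apply IH; intros; apply HF; lia | apply HF; lia].
Qed.

Lemma polyclosed_quadF d A B (U : nat -> R -> R) :
  (forall i, (i < d)%nat -> P (U i)) -> P (fun t => quadF d A B (fun i => U i t)).
Proof.
  intros HU. unfold quadF, inner, matvec.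
  apply P_plus; [apply P_mult; [apply P_const|] |];
    apply (polyclosed_rsum d (fun i t => U i t * _)); intros i Hi;
    apply P_mult; auto.
  apply (polyclosed_rsum d (fun j t => A i j * U j t)); intros j Hj; auto.
Qed.

End PolynomialClosure.

Lemma continuity_quadF d A B (U : nat -> R -> R) :
  (forall i, (i < d)%nat -> continuity (U i)) ->
  continuity (fun t => quadF d A B (fun i => U i t)).
Proof.
  apply polyclosed_quadF.
  - apply continuity_cst.
  - intros f g; apply continuity_plus.
  - intros f g; apply continuity_mult.
Qed.

Definition is_C1 (F F' : R -> R) : Prop := (forall t, is_derive F t (F' t)) /\ continuity F'.
Definition ex_C1 (F : R -> R) : Prop := exists F', is_C1 F F'.

Lemma ex_derive_continuity F : (forall t, ex_derive F t) -> continuity F.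
Proof.
  intros HF t. apply continuity_pt_filterlim.
  apply (ex_derive_continuous (K := R_AbsRing) (V := R_NormedModule)), HF.
Qed.

Lemma is_C1_continuity F F' : is_C1 F F' -> continuity F.
Proof. intros [HF _]. apply ex_derive_continuity. intros t; eexists; apply HF. Qed.

Lemma ex_C1_const c : ex_C1 (fun _ => c).
Proof.
  exists (fun _ => 0).
  split; [intros t; apply (is_derive_const (V := R_NormedModule)) | apply continuity_cst].
Qed.

Lemma ex_C1_plus f g : ex_C1 f -> ex_C1 g -> ex_C1 (fun t => f t + g t).
Proof.
  intros [f' [Df Cf']] [g' [Dg Cg']]. exists (fun t => f' t + g' t).
  split; [intros t; apply (is_derive_plus f g); [apply Df | apply Dg] | apply continuity_plus; assumption].
Qed.

Lemma ex_C1_mult f g : ex_C1 f -> ex_C1 g -> ex_C1 (fun t => f t * g t).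
Proof.
  intros [f' Hf] [g' Hg].
  pose proof (is_C1_continuity f f' Hf) as Cf. pose proof (is_C1_continuity g g' Hg) as Cg.
  destruct Hf as [Df Cf'], Hg as [Dg Cg'].
  exists (fun t => f' t * g t + f t * g' t). split.
  - intros t. apply (is_derive_mult f g); [apply Df | apply Dg | intros; apply Rmult_comm].
  - apply continuity_plus; apply continuity_mult; assumption.
Qed.

Lemma ex_C1_minus f g : ex_C1 f -> ex_C1 g -> ex_C1 (fun t => f t - g t).
Proof. exact (polyclosed_minus ex_C1 ex_C1_const ex_C1_plus ex_C1_mult f g). Qed.

Lemma ex_C1_rsum n (F : nat -> R -> R) :
  (forall i, (i < n)%nat -> ex_C1 (F i)) -> ex_C1 (fun t => rsum n (fun i => F i t)).
Proof. exact (polyclosed_rsum ex_C1 ex_C1_const ex_C1_plus n F). Qed.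

Lemma ex_C1_quadF d A B (U : nat -> R -> R) :
  (forall i, (i < d)%nat -> ex_C1 (U i)) -> ex_C1 (fun t => quadF d A B (fun i => U i t)).
Proof. exact (polyclosed_quadF ex_C1 ex_C1_const ex_C1_plus ex_C1_mult d A B U). Qed.

Definition extend_affine (f f' : R -> R) (t : R) : R :=
  if Rlt_dec t 0 then f 0 + f' 0 * t else f t.

Lemma extend_affine_nonneg f f' t : 0 <= t -> extend_affine f f' t = f t.
Proof. intros Ht. unfold extend_affine. destruct Rlt_dec; [lra | reflexivity]. Qed.

Lemma is_derive_extend_affine f f' : deriv_Rplus f f' ->
  forall t, is_derive (extend_affine f f') t (f' (Rmax 0 t)).
Proof.
  intros Hf t. apply is_derive_Reals. intros eps Heps.
  destruct (Rtotal_order t 0) as [Hlt | [-> | Hgt]].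
  - assert (Ht : 0 < - t) by lra. exists (mkposreal _ Ht). simpl. intros u Hu Hut.
    rewrite Rmax_left by lra. unfold extend_affine.
    destruct (Rlt_dec (t + u) 0); [| apply Rabs_def2 in Hut; lra].
    destruct (Rlt_dec t 0); [| lra].
    replace ((f 0 + f' 0 * (t + u) - (f 0 + f' 0 * t)) / u - f' 0) with 0 by (field; exact Hu).
    rewrite Rabs_R0; exact Heps.
  - destruct (Hf 0 (Rle_refl 0) eps Heps) as [delta [Hdelta Hquot]].
    exists (mkposreal _ Hdelta). simpl. intros u Hu Hudelta.
    rewrite Rmax_left, Rplus_0_l by lra. unfold extend_affine.
    destruct (Rlt_dec 0 0); [lra|]. destruct (Rlt_dec u 0).
    + replace ((f 0 + f' 0 * u - f 0) / u - f' 0) with 0 by (field; exact Hu).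
      rewrite Rabs_R0; exact Heps.
    + specialize (Hquot u). rewrite Rminus_0_r in Hquot. apply Hquot; auto; lra.
  - destruct (Hf t (Rlt_le _ _ Hgt) eps Heps) as [delta [Hdelta Hquot]].
    assert (Hmin : 0 < Rmin delta t) by (apply Rmin_pos; lra).
    exists (mkposreal _ Hmin). simpl. intros u Hu Hut.
    pose proof (Rmin_l delta t). pose proof (Rmin_r delta t).
    apply Rabs_def2 in Hut as [Hut1 Hut2].
    rewrite Rmax_right by lra. rewrite !extend_affine_nonneg by lra.
    specialize (Hquot (t + u)). replace (t + u - t) with u in Hquot by ring.
    apply Hquot; [lra | lra | apply Rabs_def1; lra].
Qed.

Ltac abs_lra := unfold Rabs in *; repeat destruct Rcase_abs; lra.

Lemma continuity_Rmax0 f : cont_Rplus f -> continuity (fun t => f (Rmax 0 t)).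
Proof.
  intros Hf t eps Heps.
  destruct (Hf (Rmax 0 t) (Rmax_l 0 t) eps Heps) as [delta [Hdelta Hclose]].
  exists delta; split; [exact Hdelta|]. intros s [_ Hst]. simpl in *. unfold R_dist in *.
  apply Hclose; [apply Rmax_l|].
  eapply Rle_lt_trans; [|exact Hst].
  unfold Rmax; destruct (Rle_dec 0 s), (Rle_dec 0 t); abs_lra.
Qed.

Lemma cont_Rplus_continuity f g : continuity g -> (forall t, 0 <= t -> f t = g t) -> cont_Rplus f.
Proof.
  intros Hg Hfg t Ht eps Heps.
  destruct (Hg t eps Heps) as [delta [Hdelta Hclose]].
  exists delta; split; [exact Hdelta|]. intros s Hs Hst. rewrite !Hfg by assumption.
  destruct (Req_dec s t) as [-> | Hneq]; [rewrite Rminus_diag, Rabs_R0; exact Heps|].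
  apply (Hclose s); split; [split; [exact I | congruence] | exact Hst].
Qed.

Lemma ex_C1_extend_affine f f' : deriv_Rplus f f' -> cont_Rplus f' -> ex_C1 (extend_affine f f').
Proof.
  intros Hf Hf'. exists (fun t => f' (Rmax 0 t)).
  split; [apply is_derive_extend_affine, Hf | apply continuity_Rmax0, Hf'].
Qed.

Lemma continuity_bounded f a b : continuity f ->
  exists M, 0 <= M /\ forall t, a <= t <= b -> Rabs (f t) <= M.
Proof.
  intros Hf. destruct (Rle_dec a b) as [Hab | Hab]; [| exists 0; split; intros; lra].
  destruct (continuity_ab_maj f a b Hab (fun c _ => Hf c)) as [tmax [Hmax _]].
  destruct (continuity_ab_maj (fun t => - f t) a b Hab (fun c _ => continuity_pt_opp _ _ (Hf c)))
    as [tmin [Hmin _]].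
  exists (Rabs (f tmax) + Rabs (f tmin)). split; [pose proof (Rabs_pos (f tmax)); pose proof (Rabs_pos (f tmin)); lra|].
  intros t Ht. specialize (Hmax t Ht). specialize (Hmin t Ht). abs_lra.
Qed.

Lemma ex_RInt_continuity f a b : continuity f -> ex_RInt f a b.
Proof.
  intros Hf. apply (ex_RInt_continuous (V := R_CompleteNormedModule)).
  intros z _. apply continuity_pt_filterlim, Hf.
Qed.

Lemma abs_RInt_le_const_ball f a b M : continuity f ->
  (forall t, Rabs (t - a) <= Rabs (b - a) -> Rabs (f t) <= M) ->
  Rabs (RInt f a b) <= M * Rabs (b - a).
Proof.
  intros Hf HM. destruct (Rle_dec a b) as [Hab | Hab].
  - rewrite (Rabs_right (b - a)), Rmult_comm by lra.
    apply abs_RInt_le_const; [exact Hab | apply ex_RInt_continuity, Hf |].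
    intros t Ht. apply HM. abs_lra.
  - rewrite <- opp_RInt_swap by (apply ex_RInt_continuity, Hf).
    change (Rabs (- RInt f b a) <= M * Rabs (b - a)).
    rewrite Rabs_Ropp, (Rabs_left (b - a)), Rmult_comm by lra.
    replace (- (b - a)) with (a - b) by ring.
    apply abs_RInt_le_const; [lra | apply ex_RInt_continuity, Hf |].
    intros t Ht. apply HM. abs_lra.
Qed.

Definition conv (K w : R -> R) (tau : R) : R := RInt (fun s => w s * K (tau - s)) 0 tau.

Lemma continuity_reflect K tau : continuity K -> continuity (fun s => K (tau - s)).
Proof.
  intros HK. apply (continuity_comp (fun s => tau - s) K); [| exact HK].
  apply continuity_minus; [apply continuity_cst | apply derivable_continuous, derivable_id].
Qed.

Lemma continuity_conv_integrand K w tau : continuity K -> continuity w ->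
  continuity (fun s => w s * K (tau - s)).
Proof. intros HK Hw. apply continuity_mult; [exact Hw | apply continuity_reflect, HK]. Qed.

Lemma ex_RInt_conv_integrand K w tau a b : continuity K -> continuity w ->
  ex_RInt (fun s => w s * K (tau - s)) a b.
Proof. intros HK Hw. apply ex_RInt_continuity, continuity_conv_integrand; assumption. Qed.

Lemma conv_minus K w1 w2 t : continuity K -> continuity w1 -> continuity w2 ->
  conv K (fun s => w1 s - w2 s) t = conv K w1 t - conv K w2 t.
Proof.
  intros HK H1 H2. unfold conv.
  rewrite <- (RInt_minus (V := R_CompleteNormedModule)) by (apply ex_RInt_conv_integrand; assumption).
  apply RInt_ext. intros s _. change ((w1 s - w2 s) * K (t - s) = w1 s * K (t - s) - w2 s * K (t - s)). ring.
Qed.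

Lemma conv_scal_kernel c K w t : continuity K -> continuity w ->
  conv (fun u => c * K u) w t = c * conv K w t.
Proof.
  intros HK Hw. unfold conv.
  rewrite <- (RInt_scal (V := R_CompleteNormedModule)) by (apply ex_RInt_conv_integrand; assumption).
  apply RInt_ext. intros s _. change (w s * (c * K (t - s)) = c * (w s * K (t - s))). ring.
Qed.

Lemma conv_abs_le K w L M y : 0 <= y -> continuity K -> continuity w ->
  (forall s, 0 <= s <= y -> Rabs (K s) <= L) ->
  (forall s, 0 <= s <= y -> Rabs (w s) <= M) ->
  Rabs (conv K w y) <= M * L * y.
Proof.
  intros Hy HK Hw HKL HwM. unfold conv.
  replace (M * L * y) with ((y - 0) * (M * L)) by ring.
  apply abs_RInt_le_const; [exact Hy | apply ex_RInt_conv_integrand; assumption |].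
  intros s Hs. rewrite Rabs_mult.
  apply Rmult_le_compat; [apply Rabs_pos | apply Rabs_pos | apply HwM, Hs | apply HKL; lra].
Qed.

Lemma conv_abs_le_exp K w L B y : 0 <= y -> continuity K -> continuity w ->
  (forall s, 0 <= s <= y -> Rabs (K s) <= L) ->
  (forall s, 0 <= s <= y -> Rabs (w s) <= B * exp (2 * L * s)) ->
  Rabs (conv K w y) <= B * exp (2 * L * y) / 2.
Proof.
  intros Hy HK Hw HKL HwB.
  assert (HB : 0 <= B).
  { specialize (HwB 0 ltac:(lra)). rewrite Rmult_0_r, exp_0, Rmult_1_r in HwB.
    pose proof (Rabs_pos (w 0)); lra. }
  assert (HL : 0 <= L) by (specialize (HKL 0 ltac:(lra)); pose proof (Rabs_pos (K 0)); lra).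
  assert (Hprim : RInt (fun s => B * L * exp (2 * L * s)) 0 y = B * exp (2 * L * y) / 2 - B / 2).
  { apply is_RInt_unique.
    replace (B / 2) with (B * exp (2 * L * 0) / 2) by (rewrite Rmult_0_r, exp_0; field).
    apply (is_RInt_derive (V := R_CompleteNormedModule) (fun s => B * exp (2 * L * s) / 2)).
    - intros s _. auto_derive; [exact I | field].
    - intros s _. apply continuity_pt_filterlim, ex_derive_continuity.
      intros u. auto_derive. exact I. }
  unfold conv. eapply Rle_trans; [apply abs_RInt_le; [exact Hy | apply ex_RInt_conv_integrand; assumption]|].
  eapply Rle_trans; [apply RInt_le with (g := fun s => B * L * exp (2 * L * s)); [exact Hy | | |] |].
  - apply ex_RInt_continuity. intros t. apply continuity_pt_filterlim, (continuous_Rabs_comp (fun s => w s * K (y - s))).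
    apply (continuity_pt_filterlim (fun s => w s * K (y - s))), continuity_conv_integrand; assumption.
  - apply ex_RInt_continuity, ex_derive_continuity. intros u. auto_derive. exact I.
  - intros s Hs. rewrite Rabs_mult.
    replace (B * L * exp (2 * L * s)) with (B * exp (2 * L * s) * L) by ring.
    apply Rmult_le_compat; [apply Rabs_pos | apply Rabs_pos | apply HwB; lra | apply HKL; lra].
  - rewrite Hprim. lra.
Qed.

Lemma mult_div_succ_lt a e : 0 <= a -> 0 < e -> a * (e / (a + 1)) < e.
Proof.
  intros Ha He. replace (a * (e / (a + 1))) with (e * (a / (a + 1))) by (field; lra).
  rewrite <- (Rmult_1_r e) at 2. apply Rmult_lt_compat_l; [exact He|].
  apply Rmult_lt_reg_r with (a + 1); [lra|]. unfold Rdiv. rewrite Rmult_assoc, Rinv_l; lra.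
Qed.

Lemma conv_increment K w x x' : continuity K -> continuity w ->
  conv K w x' - conv K w x =
  RInt (fun s => w s * (K (x' - s) - K (x - s))) 0 x + RInt (fun s => w s * K (x' - s)) x x'.
Proof.
  intros HK Hw. unfold conv.
  rewrite <- (RInt_Chasles (V := R_CompleteNormedModule) _ 0 x x') by (apply ex_RInt_conv_integrand; assumption).
  rewrite (RInt_ext (fun s => w s * (K (x' - s) - K (x - s))) (fun s => minus (w s * K (x' - s)) (w s * K (x - s))))
    by (intros s _; unfold minus, plus, opp; simpl; ring).
  rewrite (RInt_minus (V := R_CompleteNormedModule)) by (apply ex_RInt_conv_integrand; assumption).
  cbn -[RInt]. ring.
Qed.

(* The first integral of conv_increment is small by uniform continuity of K, the second by the
   length of [x, x']. *)
Lemma continuity_conv K w : continuity K -> continuity w -> continuity (conv K w).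
Proof.
  intros HK Hw x eps Heps. remember (Rabs x + 1) as r eqn:Hr_def.
  assert (Hr : 1 <= r) by (pose proof (Rabs_pos x); lra).
  destruct (continuity_bounded w (- r) r Hw) as [Mw [HMw0 HMw]].
  destruct (continuity_bounded K (- (2 * r)) (2 * r) HK) as [MK [HMK0 HMK]].
  assert (HrMw : 0 <= r * Mw) by (apply Rmult_le_pos; lra).
  assert (HMwMK : 0 <= Mw * MK) by (apply Rmult_le_pos; lra).
  assert (Heta : 0 < eps / 2 / (r * Mw + 1)) by (apply Rdiv_lt_0_compat; lra).
  destruct (Heine_cor2 (f := K) (a := - (2 * r)) (b := 2 * r) (fun t _ => HK t) (mkposreal _ Heta)) as [delta Hunif].
  simpl in Hunif.
  assert (Halp : 0 < Rmin 1 (Rmin delta (eps / 2 / (Mw * MK + 1))))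
    by (repeat apply Rmin_pos; try lra; try apply cond_pos; apply Rdiv_lt_0_compat; lra).
  exists (Rmin 1 (Rmin delta (eps / 2 / (Mw * MK + 1)))); split; [exact Halp|].
  intros x' [_ Hx']. simpl in Hx'. unfold R_dist in Hx'.
  assert (Hx'1 : Rabs (x' - x) < 1) by (eapply Rlt_le_trans; [exact Hx' | apply Rmin_l]).
  assert (Hx'delta : Rabs (x' - x) < delta)
    by (eapply Rlt_le_trans; [exact Hx' | eapply Rle_trans; [apply Rmin_r | apply Rmin_l]]).
  assert (Hx'eps : Rabs (x' - x) < eps / 2 / (Mw * MK + 1))
    by (eapply Rlt_le_trans; [exact Hx' | eapply Rle_trans; [apply Rmin_r | apply Rmin_r]]).
  clear Hx'.
  assert (Hnear : Rabs (RInt (fun s => w s * (K (x' - s) - K (x - s))) 0 x) <= Mw * (eps / 2 / (r * Mw + 1)) * Rabs (x - 0)).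
  { apply abs_RInt_le_const_ball.
    - apply continuity_mult; [exact Hw|].
      apply continuity_minus; apply continuity_reflect, HK.
    - intros t Ht. rewrite Rabs_mult. apply Rmult_le_compat; [apply Rabs_pos | apply Rabs_pos | apply HMw; abs_lra |].
      apply Rlt_le, Hunif; [abs_lra | abs_lra | replace (x' - t - (x - t)) with (x' - x) by ring; lra]. }
  assert (Hfar : Rabs (RInt (fun s => w s * K (x' - s)) x x') <= Mw * MK * Rabs (x' - x)).
  { apply abs_RInt_le_const_ball; [apply continuity_conv_integrand; assumption|].
    intros t Ht. rewrite Rabs_mult. apply Rmult_le_compat; [apply Rabs_pos | apply Rabs_pos | apply HMw | apply HMK]; abs_lra. }
  assert (Hnear' : Mw * (eps / 2 / (r * Mw + 1)) * Rabs (x - 0) < eps / 2).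
  { pose proof (mult_div_succ_lt (r * Mw) (eps / 2) HrMw ltac:(lra)).
    assert (0 <= Mw * (eps / 2 / (r * Mw + 1))) by (apply Rmult_le_pos; lra).
    rewrite Rminus_0_r. nra. }
  assert (Hfar' : Mw * MK * Rabs (x' - x) < eps / 2).
  { eapply Rle_lt_trans; [| apply (mult_div_succ_lt (Mw * MK)); lra].
    apply Rmult_le_compat_l; lra. }
  change (Rabs (conv K w x' - conv K w x) < eps). rewrite conv_increment by assumption.
  eapply Rle_lt_trans; [apply Rabs_triang | lra].
Qed.

Lemma is_derive_conv_integrand th k k' t u : is_C1 k k' ->
  is_derive (fun z => th t * k (z - t)) u (th t * k' (u - t)).
Proof.
  intros [Hk _]. apply is_derive_Reals.
  replace (th t * k' (u - t)) with (th t * (k' (u - t) * 1)) by ring.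
  apply derivable_pt_lim_scal, (derivable_pt_lim_comp (fun z => z - t) k).
  - replace 1 with (1 - 0) by ring.
    apply (derivable_pt_lim_minus id (fct_cte t)); [apply derivable_pt_lim_id | apply derivable_pt_lim_const].
  - apply is_derive_Reals, Hk.
Qed.

Lemma is_derive_conv th k k' x : continuity th -> is_C1 k k' ->
  is_derive (conv k th) x (th x * k 0 + conv k' th x).
Proof.
  intros Hth Hk. pose proof (is_C1_continuity k k' Hk) as Ck. destruct Hk as [Dk Ck'].
  pose (f := fun tau s => th s * k (tau - s)).
  assert (Hf' : forall u t, Derive (fun z => f z t) u = th t * k' (u - t)).
  { intros u t. apply is_derive_unique, is_derive_conv_integrand. split; assumption. }
  assert (Hf'cont : forall u v, continuity_2d_pt (fun u v => Derive (fun z => f z v) u) u v).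
  { intros u v. apply continuity_2d_pt_ext with (f := fun u v => th v * k' (u - v)).
    - intros; rewrite Hf'; reflexivity.
    - apply continuity_2d_pt_mult.
      + apply (continuity_1d_2d_pt_comp th (fun _ v => v)); [apply Hth | apply continuity_2d_pt_id2].
      + apply (continuity_1d_2d_pt_comp k' (fun u v => u - v)); [apply Ck'|].
        apply continuity_2d_pt_minus; [apply continuity_2d_pt_id1 | apply continuity_2d_pt_id2]. }
  assert (Hint : forall y a b, ex_RInt (fun s => f y s) a b)
    by (intros; apply ex_RInt_conv_integrand; assumption).
  assert (HD := is_derive_RInt_param_bound_comp f (fun _ => 0) (fun y => y) x 0 1).
  unfold conv. replace (th x * k 0 + RInt (fun s => th s * k' (x - s)) 0 x) with
    (RInt (fun t => Derive (fun u => f u t) x) 0 x + - f x 0 * 0 + f x x * 1).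
  2:{ unfold f. rewrite Rminus_diag, (RInt_ext _ (fun s => th s * k' (x - s))) by (intros; apply Hf'). ring. }
  apply HD.
  - apply filter_forall. intros; apply Hint.
  - exists (mkposreal 1 Rlt_0_1). apply filter_forall. intros; apply Hint.
  - exists (mkposreal 1 Rlt_0_1). apply filter_forall. intros; apply Hint.
  - apply (is_derive_const (V := R_NormedModule)).
  - apply (is_derive_id (K := R_AbsRing)).
  - exists (mkposreal 1 Rlt_0_1). apply filter_forall. intros y t _. eexists.
    apply (is_derive_conv_integrand th k k'). split; assumption.
  - intros t _. apply Hf'cont.
  - exists (mkposreal 1 Rlt_0_1). intros; apply Hf'cont.
  - exists (mkposreal 1 Rlt_0_1). intros; apply Hf'cont.
  - apply continuity_conv_integrand; assumption.
  - apply continuity_conv_integrand; assumption.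
Qed.

Lemma is_derive_eq0_of_vanish_right F x l : is_derive F x l -> (forall s, x <= s -> F s = 0) -> l = 0.
Proof.
  intros HF Hvanish. apply is_derive_Reals in HF.
  destruct (Req_dec l 0) as [| Hl]; [assumption | exfalso].
  destruct (HF (Rabs l) (Rabs_pos_lt _ Hl)) as [delta Hdelta].
  pose proof (cond_pos delta).
  specialize (Hdelta (delta / 2) ltac:(lra) ltac:(rewrite Rabs_right; lra)).
  rewrite !Hvanish in Hdelta by lra.
  replace ((0 - 0) / (delta / 2) - l) with (- l) in Hdelta by (field; lra).
  rewrite Rabs_Ropp in Hdelta. lra.
Qed.

Lemma exp_le_compat x y : x <= y -> exp x <= exp y.
Proof. intros [Hlt | ->]; [apply Rlt_le, exp_increasing, Hlt | apply Rle_refl]. Qed.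

Lemma pow_half_pos n : 0 < (/ 2) ^ n.
Proof. apply pow_lt; lra. Qed.

Lemma pow_half_lt C eps : 0 < eps -> exists N, forall n, (N <= n)%nat -> C * (/ 2) ^ n < eps.
Proof.
  intros Heps. pose proof (Rabs_pos C).
  destruct (pow_lt_1_zero (/ 2) ltac:(rewrite Rabs_right; lra) (eps / (Rabs C + 1))
    ltac:(apply Rdiv_lt_0_compat; lra)) as [N HN].
  exists N. intros n Hn. specialize (HN n Hn).
  rewrite Rabs_right in HN by (apply Rle_ge, Rlt_le, pow_half_pos).
  pose proof (pow_half_pos n). pose proof (mult_div_succ_lt (Rabs C) eps ltac:(lra) Heps).
  pose proof (Rle_abs C). nra.
Qed.

Lemma eq0_of_le_pow_half C x : (forall n, Rabs x <= C * (/ 2) ^ n) -> x = 0.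
Proof.
  intros Hx. destruct (Req_dec x 0) as [| Hneq]; [assumption | exfalso].
  destruct (pow_half_lt C (Rabs x) (Rabs_pos_lt _ Hneq)) as [N HN].
  specialize (HN N (Nat.le_refl N)). specialize (Hx N). lra.
Qed.

Section VolterraSecondKind.

Variable K : R -> R.
Hypothesis HK : continuity K.

Lemma conv_iterates_geometric (v : nat -> R -> R) T B : 0 <= T -> (forall n, continuity (v n)) ->
  (forall y, 0 <= y <= T -> Rabs (v O y) <= B) ->
  (forall n y, 0 <= y <= T -> Rabs (v (S n) y) <= Rabs (conv K (v n) y)) ->
  exists C, forall n y, 0 <= y <= T -> Rabs (v n y) <= C * (/ 2) ^ n.
Proof.
  intros HT Hv Hv0 Hstep.
  destruct (continuity_bounded K 0 T HK) as [L [HL0 HL]].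
  assert (HB : 0 <= B) by (pose proof (Rabs_pos (v O 0)); specialize (Hv0 0 ltac:(lra)); lra).
  assert (Hweighted : forall n y, 0 <= y <= T -> Rabs (v n y) <= B * (/ 2) ^ n * exp (2 * L * y)).
  { induction n as [|n IH]; intros y Hy.
    - pose proof (exp_ineq1_le (2 * L * y)). assert (0 <= 2 * L * y) by (apply Rmult_le_pos; lra).
      specialize (Hv0 y Hy). simpl. nra.
    - eapply Rle_trans; [apply Hstep, Hy|].
      eapply Rle_trans; [apply conv_abs_le_exp with (L := L); [lra | exact HK | apply Hv | |] |].
      + intros s Hs. apply HL. lra.
      + intros s Hs. apply IH. lra.
      + simpl. lra. }
  exists (B * exp (2 * L * T)). intros n y Hy.
  eapply Rle_trans; [apply Hweighted, Hy|].
  rewrite Rmult_assoc, (Rmult_comm ((/ 2) ^ n)), <- Rmult_assoc.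
  apply Rmult_le_compat_r; [apply Rlt_le, pow_half_pos|].
  apply Rmult_le_compat_l; [exact HB|]. apply exp_le_compat. nra.
Qed.

Lemma volterra2_homogeneous_eq0 w : continuity w -> (forall t, 0 <= t -> w t = - conv K w t) ->
  forall t, 0 <= t -> w t = 0.
Proof.
  intros Hw Heq T HT.
  destruct (continuity_bounded w 0 T Hw) as [B [_ HB]].
  destruct (conv_iterates_geometric (fun _ => w) T B HT (fun _ => Hw) HB) as [C HC].
  - intros n y Hy. rewrite Heq at 1 by lra. rewrite Rabs_Ropp. apply Rle_refl.
  - apply (eq0_of_le_pow_half C). intros n. apply HC. lra.
Qed.

Variable f : R -> R.
Hypothesis Hf : continuity f.

Fixpoint picard (n : nat) : R -> R :=
  match n with O => f | S m => fun t => f t - conv K (picard m) t end.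

Lemma continuity_picard n : continuity (picard n).
Proof.
  induction n as [|n IH]; simpl; [exact Hf|].
  apply continuity_minus; [exact Hf | apply continuity_conv; assumption].
Qed.

Lemma picard_cauchy T : 0 <= T -> exists E, 0 <= E /\
  forall n k y, 0 <= y <= T -> Rabs (picard (n + k) y - picard n y) <= E * ((/ 2) ^ n - (/ 2) ^ (n + k)).
Proof.
  intros HT. set (v := fun n t => picard (S n) t - picard n t).
  assert (Hv : forall n, continuity (v n)) by (intros n; apply continuity_minus; apply continuity_picard).
  destruct (continuity_bounded (v O) 0 T (Hv O)) as [B [_ HB]].
  destruct (conv_iterates_geometric v T B HT Hv HB) as [C HC].
  { intros n y _. unfold v. rewrite conv_minus by first [exact HK | apply continuity_picard].
    change (picard (S (S n)) y) with (f y - conv K (picard (S n)) y).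
    change (picard (S n) y) with (f y - conv K (picard n) y).
    rewrite <- Rabs_Ropp. right. f_equal. ring. }
  assert (HC0 : 0 <= C) by (pose proof (Rabs_pos (v O 0)); specialize (HC O 0 ltac:(lra)); simpl in HC; lra).
  exists (2 * C). split; [lra|]. intros n k y Hy. induction k as [|k IH].
  - rewrite Nat.add_0_r, !Rminus_diag, Rabs_R0, Rmult_0_r. apply Rle_refl.
  - replace (n + S k)%nat with (S (n + k)) by lia.
    replace (picard (S (n + k)) y - picard n y) with (v (n + k)%nat y + (picard (n + k) y - picard n y))
      by (unfold v; ring).
    eapply Rle_trans; [apply Rabs_triang|]. specialize (HC (n + k)%nat y Hy).
    change ((/ 2) ^ S (n + k)) with (/ 2 * (/ 2) ^ (n + k)). lra.
Qed.

Definition picard_lim (y : R) : R := real (Lim_seq (fun n => picard n y)).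

Lemma picard_lim_approx T : 0 <= T -> exists E, 0 <= E /\
  forall n y, 0 <= y <= T -> Rabs (picard n y - picard_lim y) <= E * (/ 2) ^ n.
Proof.
  intros HT. destruct (picard_cauchy T HT) as [E [HE0 HE]].
  exists E. split; [exact HE0|]. intros n y Hy.
  assert (Hdist : forall p q, (p <= q)%nat -> Rabs (picard q y - picard p y) <= E * (/ 2) ^ p).
  { intros p q Hpq. replace q with (p + (q - p))%nat by lia.
    eapply Rle_trans; [apply HE, Hy|]. pose proof (pow_half_pos (p + (q - p))). nra. }
  assert (Hlim : ex_finite_lim_seq (fun n => picard n y)).
  { apply ex_lim_seq_cauchy_corr. intros eps.
    destruct (pow_half_lt E eps (cond_pos eps)) as [N HN]. exists N. intros p q Hp Hq.
    destruct (Nat.le_ge_cases p q) as [Hpq | Hqp].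
    - rewrite Rabs_minus_sym. eapply Rle_lt_trans; [apply Hdist, Hpq | apply HN, Hp].
    - eapply Rle_lt_trans; [apply Hdist, Hqp | apply HN, Hq]. }
  apply Lim_seq_correct' in Hlim. apply (is_lim_seq_incr_n _ n) in Hlim.
  pose proof (is_lim_seq_abs _ _ (is_lim_seq_minus' _ _ _ _ Hlim (is_lim_seq_const (picard n y)))) as Habs.
  rewrite Rabs_minus_sym.
  apply (is_lim_seq_le _ _ _ _ (fun k => Hdist n (k + n)%nat ltac:(lia)) Habs (is_lim_seq_const _)).
Qed.

Lemma cont_Rplus_picard_lim : cont_Rplus picard_lim.
Proof.
  intros t Ht eps Heps.
  destruct (picard_lim_approx (t + 1) ltac:(lra)) as [E [_ HE]].
  destruct (pow_half_lt E (eps / 3) ltac:(lra)) as [N HN]. specialize (HN N (Nat.le_refl N)).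
  destruct (continuity_picard N t (eps / 3) ltac:(lra)) as [delta [Hdelta Hclose]].
  exists (Rmin 1 delta). split; [apply Rmin_pos; lra|]. intros s Hs Hst.
  pose proof (Rmin_l 1 delta). pose proof (Rmin_r 1 delta).
  assert (Hs1 : s <= t + 1) by abs_lra.
  pose proof (HE N s ltac:(lra)). pose proof (HE N t ltac:(lra)).
  assert (Hnear : Rabs (picard N s - picard N t) < eps / 3).
  { destruct (Req_dec s t) as [-> | Hneq]; [rewrite Rminus_diag, Rabs_R0; lra|].
    apply (Hclose s). split; [split; [exact I | congruence] | simpl; unfold R_dist; lra]. }
  replace (picard_lim s - picard_lim t) with
    (- (picard N s - picard_lim s) + (picard N s - picard N t) + (picard N t - picard_lim t)) by ring.
  pose proof (Rabs_triang (- (picard N s - picard_lim s) + (picard N s - picard N t)) (picard N t - picard_lim t)).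
  pose proof (Rabs_triang (- (picard N s - picard_lim s)) (picard N s - picard N t)).
  rewrite Rabs_Ropp in *. lra.
Qed.

Lemma volterra2_exists : exists th, continuity th /\ forall t, 0 <= t -> th t = f t - conv K th t.
Proof.
  set (th := fun y => picard_lim (Rmax 0 y)).
  assert (Hth : continuity th) by apply continuity_Rmax0, cont_Rplus_picard_lim.
  exists th. split; [exact Hth|]. intros T HT.
  destruct (picard_lim_approx T HT) as [E [HE0 HE]].
  destruct (continuity_bounded K 0 T HK) as [L [HL0 HL]].
  assert (Hth_lim : forall s, 0 <= s -> th s = picard_lim s) by (intros; unfold th; rewrite Rmax_right; lra).
  apply Rminus_diag_uniq, (eq0_of_le_pow_half (E + E * L * T)). intros n.
  assert (Hconv : Rabs (conv K (fun s => picard n s - th s) T) <= E * (/ 2) ^ n * L * T).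
  { apply conv_abs_le; [exact HT | exact HK | apply continuity_minus; [apply continuity_picard | exact Hth] | |].
    - intros s Hs. apply HL, Hs.
    - intros s Hs. rewrite Hth_lim by lra. apply HE, Hs. }
  rewrite conv_minus in Hconv by first [exact HK | exact Hth | apply continuity_picard].
  pose proof (HE (S n) T ltac:(lra)) as Happrox. simpl in Happrox.
  replace (th T - (f T - conv K th T)) with
    (- (f T - conv K (picard n) T - picard_lim T) + - (conv K (picard n) T - conv K th T))
    by (rewrite Hth_lim by lra; ring).
  eapply Rle_trans; [apply Rabs_triang|]. rewrite !Rabs_Ropp.
  assert (0 <= E * (/ 2) ^ n) by (apply Rmult_le_pos; [exact HE0 | apply Rlt_le, pow_half_pos]).
  nra.
Qed.

End VolterraSecondKind.

Section VolterraFirstKind.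

Variables k k' : R -> R.
Hypothesis Hk : is_C1 k k'.
Hypothesis Hk0 : k 0 <> 0.

Lemma continuity_normalized_kernel : continuity (fun t => / k 0 * k' t).
Proof.
  apply continuity_mult; [apply continuity_cst | apply (proj2 Hk)].
Qed.

Lemma is_derive_conv_normalized th x : continuity th ->
  is_derive (conv k th) x (k 0 * (th x + conv (fun t => / k 0 * k' t) th x)).
Proof.
  intros Hth. replace (k 0 * (th x + conv (fun t => / k 0 * k' t) th x)) with (th x * k 0 + conv k' th x).
  - apply is_derive_conv; assumption.
  - rewrite conv_scal_kernel by first [exact Hth | apply (proj2 Hk)]. field. exact Hk0.
Qed.

Lemma volterra1_homogeneous_eq0 th : continuity th -> (forall t, 0 <= t -> conv k th t = 0) ->
  forall t, 0 <= t -> th t = 0.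
Proof.
  intros Hth Hvanish.
  apply (volterra2_homogeneous_eq0 _ continuity_normalized_kernel th Hth). intros t Ht.
  pose proof (is_derive_eq0_of_vanish_right _ _ _ (is_derive_conv_normalized th t Hth)
    (fun s Hs => Hvanish s (Rle_trans _ _ _ Ht Hs))) as Hzero.
  apply Rmult_integral in Hzero as [Hk00 | Hsum]; [contradiction | lra].
Qed.

Lemma volterra1_unique th1 th2 : continuity th1 -> continuity th2 ->
  (forall t, 0 <= t -> conv k th1 t = conv k th2 t) -> forall t, 0 <= t -> th1 t = th2 t.
Proof.
  intros Hth1 Hth2 Heq t Ht. apply Rminus_diag_uniq.
  apply (volterra1_homogeneous_eq0 (fun s => th1 s - th2 s)); [apply continuity_minus; assumption | | exact Ht].
  intros s Hs. rewrite conv_minus by first [exact Hth1 | exact Hth2 | apply (is_C1_continuity k k' Hk)].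
  rewrite Heq by exact Hs. ring.
Qed.

Variables g g' : R -> R.
Hypothesis Hg : is_C1 g g'.
Hypothesis Hg0 : g 0 = 0.

(* A solution of the differentiated equation solves the original one, because g(0) = 0. *)
Lemma volterra1_exists : exists th, continuity th /\ forall t, 0 <= t -> conv k th t = g t.
Proof.
  assert (Hsource : continuity (fun t => / k 0 * g' t))
    by (apply continuity_mult; [apply continuity_cst | apply (proj2 Hg)]).
  destruct (volterra2_exists _ continuity_normalized_kernel _ Hsource) as [th [Hth Heq]].
  exists th. split; [exact Hth|].
  set (F := fun t => conv k th t - g t).
  assert (HF : forall t, 0 <= t -> is_derive F t 0).
  { intros t Ht.
    assert (Hd : is_derive F t (k 0 * (th t + conv (fun u => / k 0 * k' u) th t) - g' t))
      by (apply (is_derive_minus (conv k th) g); [apply is_derive_conv_normalized, Hth | apply Hg]).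
    replace (k 0 * (th t + conv (fun u => / k 0 * k' u) th t) - g' t) with 0 in Hd; [exact Hd|].
    rewrite (Heq t Ht). field. exact Hk0. }
  assert (HF0 : F 0 = 0) by (unfold F, conv; rewrite RInt_point, Hg0; unfold zero; simpl; ring).
  intros T HT. apply Rminus_diag_uniq. change (F T = 0).
  destruct (Req_dec T 0) as [-> | HT0]; [exact HF0|].
  rewrite <- HF0. symmetry. apply (eq_is_derive (V := R_NormedModule)); [| lra].
  intros t Ht. apply HF. lra.
Qed.

End VolterraFirstKind.

Lemma solves_H_iff_conv d l dPhi dPsi h x kt th th2 :
  continuity kt -> (forall t, 0 <= t -> kt t = dPsi t O) ->
  continuity th2 -> (forall t, 0 <= t -> th t = th2 t) ->
  solves_H d l dPhi dPsi h x th <->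
  forall tau, 0 <= tau -> conv kt th2 tau = l - h tau - dPhi tau - inner d (dPsi tau) x.
Proof.
  intros Ckt Hkt Cth2 Hth.
  assert (Hint : forall tau, 0 <= tau ->
    RInt (fun s => th s * dPsi (tau - s) O) 0 tau = conv kt th2 tau /\
    ex_RInt (fun s => th s * dPsi (tau - s) O) 0 tau).
  { intros tau Htau.
    assert (Hext : forall s, Rmin 0 tau < s < Rmax 0 tau -> th2 s * kt (tau - s) = th s * dPsi (tau - s) O).
    { intros s Hs. rewrite Rmin_left, Rmax_right in Hs by exact Htau.
      rewrite Hth, Hkt by lra. reflexivity. }
    split.
    - symmetry. apply RInt_ext, Hext.
    - apply (ex_RInt_ext _ _ _ _ Hext), ex_RInt_conv_integrand; assumption. }
  split.
  - intros Hsol tau Htau. destruct (Hsol tau Htau) as [I [[pr Hpr] HI]].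
    destruct (Hint tau Htau) as [HRInt _]. rewrite <- HRInt, (RInt_Reals _ _ _ pr), Hpr, HI. ring.
  - intros Hconv tau Htau. destruct (Hint tau Htau) as [HRInt Hex].
    exists (RInt (fun s => th s * dPsi (tau - s) O) 0 tau). split.
    + exists (ex_RInt_Reals_0 _ _ _ Hex). symmetry. apply RInt_Reals.
    + rewrite HRInt, Hconv by exact Htau. ring.
Qed.

Local Set Implicit Arguments.

Section RiccatiData.

Variables (d : nat) (a : mat) (b : vec) (alpha : nat -> mat) (beta : nat -> vec) (lam : vec)
  (Phi : R -> R) (Psi : R -> vec) (dPhi : R -> R) (dPsi : R -> vec).
Hypothesis hd : (1 <= d)%nat.
Hypothesis hric : riccati_global_solution d a b alpha beta lam Phi Psi dPhi dPsi.

Definition psi_ext (i : nat) : R -> R := extend_affine (fun t => Psi t i) (fun t => dPsi t i).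

Lemma psi_ext_nonneg t : 0 <= t -> (fun i => psi_ext i t) = Psi t.
Proof. intros Ht. apply functional_extensionality. intros i. apply extend_affine_nonneg, Ht. Qed.

Lemma continuity_psi_ext i : (i < d)%nat -> continuity (psi_ext i).
Proof.
  intros Hi. apply ex_derive_continuity. intros t. eexists.
  apply is_derive_extend_affine, (proj1 (proj2 hric)), Hi.
Qed.

Lemma cont_Rplus_dPsi i : (i < d)%nat -> cont_Rplus (fun t => dPsi t i).
Proof.
  intros Hi. apply cont_Rplus_continuity with (fun t => RicR d alpha beta (fun j => psi_ext j t) i - lam i).
  - apply continuity_minus; [apply continuity_quadF, continuity_psi_ext | apply continuity_cst].
  - intros t Ht. rewrite psi_ext_nonneg by exact Ht. apply hric; assumption.
Qed.

Lemma ex_C1_psi_ext i : (i < d)%nat -> ex_C1 (psi_ext i).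
Proof. intros Hi. apply ex_C1_extend_affine; [apply (proj1 (proj2 hric)), Hi | apply cont_Rplus_dPsi, Hi]. Qed.

Definition riccati_kernel (t : R) : R := RicR d alpha beta (fun j => psi_ext j t) O - lam O.

Lemma ex_C1_riccati_kernel : ex_C1 riccati_kernel.
Proof. apply ex_C1_minus; [apply ex_C1_quadF, ex_C1_psi_ext | apply ex_C1_const]. Qed.

Lemma riccati_kernel_nonneg t : 0 <= t -> riccati_kernel t = dPsi t O.
Proof. intros Ht. unfold riccati_kernel. rewrite psi_ext_nonneg by exact Ht. symmetry. apply hric; [exact Ht | lia]. Qed.

Lemma riccati_kernel_0 : riccati_kernel 0 = - lam O.
Proof.
  unfold riccati_kernel, RicR. rewrite psi_ext_nonneg, quadF_eq0 by first [lra | apply hric]. ring.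
Qed.

Variables (l : R) (h h' : R -> R) (x : vec).
Hypothesis Hh : deriv_Rplus h h'.
Hypothesis Hh' : cont_Rplus h'.

Definition riccati_source (t : R) : R :=
  l - extend_affine h h' t - quadF d a b (fun j => psi_ext j t)
    - inner d (fun i => RicR d alpha beta (fun j => psi_ext j t) i - lam i) x.

Lemma ex_C1_riccati_source : ex_C1 riccati_source.
Proof.
  apply ex_C1_minus; [apply ex_C1_minus; [apply ex_C1_minus |] |].
  - apply ex_C1_const.
  - apply ex_C1_extend_affine; assumption.
  - apply ex_C1_quadF, ex_C1_psi_ext.
  - apply (ex_C1_rsum d (fun i t => (RicR d alpha beta (fun j => psi_ext j t) i - lam i) * x i)).
    intros i Hi. apply ex_C1_mult; [| apply ex_C1_const].
    apply ex_C1_minus; [apply ex_C1_quadF, ex_C1_psi_ext | apply ex_C1_const].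
Qed.

Lemma riccati_source_nonneg t : 0 <= t -> riccati_source t = l - h t - dPhi t - inner d (dPsi t) x.
Proof.
  intros Ht. unfold riccati_source. rewrite extend_affine_nonneg, psi_ext_nonneg by exact Ht.
  destruct hric as [_ [_ [_ [_ [HdPhi HdPsi]]]]]. rewrite HdPhi by exact Ht. f_equal.
  apply rsum_ext. intros i Hi. rewrite HdPsi by assumption. reflexivity.
Qed.

Lemma riccati_source_0 : h 0 = l + inner d lam x -> riccati_source 0 = 0.
Proof.
  intros h0. destruct hric as [_ [_ [_ [HPsi0 [HdPhi HdPsi]]]]].
  rewrite riccati_source_nonneg, h0, HdPhi by lra.
  rewrite quadF_eq0 by exact HPsi0.
  assert (Hinner : inner d (dPsi 0) x = - inner d lam x).
  { unfold inner. rewrite <- rsum_opp. apply rsum_ext. intros i Hi.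
    rewrite HdPsi by (lra || exact Hi). unfold RicR. rewrite quadF_eq0 by exact HPsi0. ring. }
  rewrite Hinner. ring.
Qed.

Lemma solves_H_iff_riccati th th2 : continuity th2 -> (forall t, 0 <= t -> th t = th2 t) ->
  solves_H d l dPhi dPsi h x th <-> forall tau, 0 <= tau -> conv riccati_kernel th2 tau = riccati_source tau.
Proof.
  intros Cth2 Hth.
  destruct ex_C1_riccati_kernel as [k' Hk].
  rewrite (solves_H_iff_conv d l dPhi dPsi h x riccati_kernel th th2 (is_C1_continuity _ _ Hk) riccati_kernel_nonneg Cth2 Hth).
  split; intros Hconv tau Htau; rewrite Hconv by exact Htau.
  - symmetry. apply riccati_source_nonneg, Htau.
  - apply riccati_source_nonneg, Htau.
Qed.

End RiccatiData.

Local Unset Implicit Arguments.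

Theorem mainTheorem6
  (d : nat) (hd : (1 <= d)%nat) (pos : nat -> Prop)
  (a : mat) (b : vec) (alpha : nat -> mat) (beta : nat -> vec)
  (ha : sym_psd d a) (halpha : forall i, (i < d)%nat -> sym_psd d (alpha i))
  (l : R) (lam : vec) (hlam : lam O <> 0)
  (Phi : R -> R) (Psi : R -> vec) (dPhi : R -> R) (dPsi : R -> vec)
  (hric : riccati_global_solution d a b alpha beta lam Phi Psi dPhi dPsi)
  (h : R -> R) (x : vec) (hh : C1_Rplus h) (hx : in_X d pos x)
  (h0 : h 0 = l + inner d lam x) :
  exists theta : R -> R,
    cont_Rplus theta /\ solves_H d l dPhi dPsi h x theta /\
    (forall theta' : R -> R, cont_Rplus theta' -> solves_H d l dPhi dPsi h x theta' ->
       forall t, 0 <= t -> theta' t = theta t).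
Proof.
  destruct hh as [h' [Hh Hh']].
  destruct (ex_C1_riccati_kernel hric) as [k' Hk].
  destruct (ex_C1_riccati_source hric l x Hh Hh') as [g' Hg].
  assert (Hk0 : riccati_kernel d alpha beta lam Psi dPsi 0 <> 0)
    by (rewrite (riccati_kernel_0 hric); intros Hz; apply hlam; lra).
  destruct (volterra1_exists _ _ Hk Hk0 _ _ Hg (riccati_source_0 hric h h' x h0)) as [th [Hth Hsol]].
  pose proof (solves_H_iff_riccati hd hric l h h' x) as Hiff.
  exists th. split; [| split].
  - apply (cont_Rplus_continuity th th Hth). reflexivity.
  - apply (Hiff th th Hth); [reflexivity | exact Hsol].
  - intros th' Hth' Hsol' t Ht.
    assert (Hth'ext : forall s, 0 <= s -> th' s = th' (Rmax 0 s)) by (intros s Hs; rewrite Rmax_right; lra).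
    rewrite Hth'ext by exact Ht.
    apply (volterra1_unique _ _ Hk Hk0 (fun s => th' (Rmax 0 s)) th); [apply continuity_Rmax0, Hth' | exact Hth | | exact Ht].
    intros tau Htau. rewrite Hsol by exact Htau. revert tau Htau.
    apply (Hiff th'); [apply continuity_Rmax0, Hth' | exact Hth'ext | exact Hsol'].
Qed.
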